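(* Let $G$ be a simple undirected graph and $s,t\in V(G)$. Then $s$ and $t$ lie in the same biconnected component $B$ of $G+st$, and $B = G_{s,t}+st$.
   Context: $G+st$ denotes the graph obtained from $G$ by adding the edge $st$ (equal to $G$ if $st\in E(G)$); for a subgraph $H$, $H+st$ is defined analogously. The $(s,t)$-relevant part $G_{s,t}$ of $G$ is the subgraph of $G$ induced by all vertices that lie on at least one (simple) $(s,t)$-path in $G$. Biconnected components are the classes of the equivalence relation on edges in which two edges are related if they are equal or lie on a common simple cycle; a biconnected component is regarded as the subgraph formed by such an edge class. *)

(* A simple undirected graph on a finite vertex type T is a
   symmetric irreflexive relation g : rel T. Edges are 2-element sets [set x; y]. *)
From mathcomp Require Import all_boot.
Set Implicit Arguments. Unset Strict Implicit. Unset Printing Implicit Defensive.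

Section Graphs.
Variable T : finType.

Definition add_edge (g : rel T) (s t : T) : rel T :=
  fun x y => [|| g x y, (x == s) && (y == t) | (x == t) && (y == s)].

Definition is_edge (g : rel T) (E : {set T}) : Prop :=
  exists x y, g x y /\ E = [set x; y].

Definition simple_path (g : rel T) (s t : T) (p : seq T) : Prop :=
  [/\ path g s p, uniq (s :: p) & last s p = t].

(* v lies on at least one simple (s,t)-path: v is a vertex of G_{s,t}. *)
Definition relevant (g : rel T) (s t v : T) : Prop :=
  exists p, simple_path g s t p /\ v \in s :: p.

(* Edge set of G_{s,t} + st (G_{s,t} is the induced subgraph on relevant vertices). *)
Definition relevant_plus_edges (g : rel T) (s t : T) (E : {set T}) : Prop :=
  (exists x y, [/\ g x y, relevant g s t x, relevant g s t y & E = [set x; y]])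
  \/ E = [set s; t].

Definition relevant_plus_vertices (g : rel T) (s t v : T) : Prop :=
  relevant g s t v \/ v = s \/ v = t.

Definition simple_cycle (g : rel T) (c : seq T) : Prop :=
  [/\ 3 <= size c, uniq c & cycle g c].

Definition cycle_edges (c : seq T) : seq {set T} :=
  [seq [set x; next c x] | x <- c].

Definition bicon_rel (g : rel T) (E F : {set T}) : Prop :=
  E = F \/ exists c, [/\ simple_cycle g c, E \in cycle_edges c & F \in cycle_edges c].

Definition is_bicomp (g : rel T) (B : {set {set T}}) : Prop :=
  exists E0, is_edge g E0 /\
    forall F, F \in B <-> (is_edge g F /\ bicon_rel g E0 F).

Definition bicomp_vertex (B : {set {set T}}) (v : T) : Prop :=
  exists2 F, F \in B & v \in F.

End Graphs.

From mathcomp Require Import all_boot.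
From mathcomp Require Import boolp.

Set Implicit Arguments. Unset Strict Implicit. Unset Printing Implicit Defensive.

(* An edge xy of G between two relevant vertices lies on some simple (s,t)-path:
   take simple (s,t)-paths P through x and Q through y.  If y is not on P,
   follow Q from y towards t, and from y towards s, up to the first vertex on P;
   these two exits are distinct, so one of them, c, differs from x, and P
   rerouted along x, y, ..., c is a simple (s,t)-path through xy.  Closing it
   with st gives a simple cycle of G + st through st and xy.  Conversely,
   deleting st from a simple cycle of G + st through st leaves a simple
   (s,t)-path of G, so every vertex of such a cycle is relevant. *)

Lemma next_head (T : eqType) (x : T) p : next (x :: p) x = head x p.
Proof. by case: p => [|y p]; rewrite /next /= eqxx. Qed.

Lemma next_cat_cons (T : eqType) (A B : seq T) x y :
  uniq (A ++ x :: y :: B) -> next (A ++ x :: y :: B) x = y.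
Proof. by move=> uL; rewrite -(next_rot (size A) uL) rot_size_cat next_head. Qed.

Lemma next_last (T : eqType) (x : T) p :
  uniq (x :: p) -> next (x :: p) (last x p) = x.
Proof.
rewrite lastI => u; rewrite -(next_rot (size (belast x p)) u) -cats1.
by rewrite rot_size_cat next_head; case: p {u}.
Qed.

Lemma ohead_rev_cat (T : Type) (A : seq T) x B :
  ohead (rev (A ++ x :: B)) = Some (last x B).
Proof. by rewrite rev_cat lastI rev_rcons. Qed.

Lemma mem_ohead (T : eqType) (L : seq T) x : ohead L = Some x -> x \in L.
Proof. by case: L => //= y L [->]; exact: mem_head. Qed.

Lemma mem_cycle_edges_cat (T : finType) (A B : seq T) x y :
  uniq (A ++ x :: y :: B) -> [set x; y] \in cycle_edges (A ++ x :: y :: B).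
Proof.
move=> u; apply/mapP; exists x; last by rewrite next_cat_cons.
by rewrite mem_cat mem_head orbT.
Qed.

Lemma mem_cycle_edges_pair (T : finType) (a b : T) F :
  F \in cycle_edges [:: a; b] -> F = [set a; b].
Proof.
rewrite /cycle_edges /next /= !inE !eqxx => /orP [] /eqP -> //.
by case: eqP => [-> | _]; rewrite // setUC.
Qed.

Lemma cycle_edges_rev (T : finType) (c : seq T) F :
  uniq c -> F \in cycle_edges (rev c) -> F \in cycle_edges c.
Proof.
move=> uc /mapP [v vc ->]; rewrite next_rev // setUC.
apply/mapP; exists (prev c v); first by rewrite mem_prev -mem_rev.
by rewrite next_prev.
Qed.

Section RelevantVertices.

Variables (T : finType) (g : rel T).
Hypotheses (g_sym : symmetric g) (g_irr : irreflexive g).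

Definition spath (s t : T) (L : seq T) : Prop :=
  [/\ sorted g L, uniq L, ohead L = Some s & ohead (rev L) = Some t].

Lemma spath_rev s t L : spath s t L -> spath t s (rev L).
Proof.
case=> sL uL hL lL; split; rewrite ?revK ?rev_uniq //.
by rewrite rev_sorted; apply: sub_sorted sL => x y; rewrite /= g_sym.
Qed.

Lemma spathP s t L : spath s t L <-> exists2 p, L = s :: p & simple_path g s t p.
Proof.
split=> [[] | [p -> [pp up lp]]].
  case: L => // x p pp up [<-]; rewrite -[x :: p]cat0s ohead_rev_cat => -[lp].
  by exists p.
by split; rewrite // -[s :: p]cat0s ohead_rev_cat lp.
Qed.

Lemma spath_mem_start s t L : spath s t L -> s \in L.
Proof. by case=> _ _ /mem_ohead. Qed.

Lemma spath_mem_end s t L : spath s t L -> t \in L.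
Proof. by case=> _ _ _ /mem_ohead; rewrite mem_rev. Qed.

Lemma relevantP s t v : relevant g s t v <-> exists2 L, spath s t L & v \in L.
Proof.
split=> [[p [sp vp]] | [L /spathP [p -> sp] vL]]; last by exists p.
by exists (s :: p) => //; apply/spathP; exists p.
Qed.

Lemma relevant_sym s t v : relevant g s t v -> relevant g t s v.
Proof.
case/relevantP=> L /spath_rev sL vL.
by apply/relevantP; exists (rev L); rewrite ?mem_rev.
Qed.

Lemma spath_splice s t A D B x c W :
    spath s t (A ++ x :: D ++ c :: B) -> path g x (rcons W c) -> uniq W ->
    {in W, forall w, w \notin A ++ x :: D ++ c :: B} ->
  spath s t (A ++ x :: W ++ c :: B).
Proof.
move=> [sL uL hL lL] pW uW WL; split.
- move: sL; rewrite !sorted_cat_cons cat_path => /andP [-> /andP [_]].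
  by rewrite -cat_rcons cat_path pW last_rcons => /andP [].
- have sub : subseq (rcons A x ++ c :: B) (A ++ x :: D ++ c :: B).
    by rewrite -[A ++ _]cat_rcons cat_subseq ?suffix_subseq.
  rewrite -cat_rcons uniq_catCA cat_uniq uW (subseq_uniq sub) //.
  rewrite andbT; apply/hasPn => w wW.
  by apply: contraL wW => /WL; apply: contra; apply: mem_subseq sub w.
- by case: A hL {sL uL WL lL}.
- by move: lL; rewrite !ohead_rev_cat !last_cat.
Qed.

Lemma spath_detour_fwd s t A D B x c W :
    spath s t (A ++ x :: D ++ c :: B) -> path g x (rcons W c) -> uniq W ->
    {in W, forall w, w \notin A ++ x :: D ++ c :: B} ->
  exists2 M, spath s t M & [set x; head c W] \in cycle_edges M.
Proof.
move=> sL pW uW WL; have sM := spath_splice sL pW uW WL.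
exists (A ++ x :: W ++ c :: B) => //; case: sM => _ uM _ _.
by case: W {pW uW WL} uM => [|w W] uM; exact: mem_cycle_edges_cat.
Qed.

Lemma spath_detour s t L x c W :
    spath s t L -> x \in L -> c \in L -> c != x ->
    path g x (rcons W c) -> uniq W -> {in W, forall w, w \notin L} ->
  exists2 M, spath s t M & [set x; head c W] \in cycle_edges M.
Proof.
move=> sL xL cL cx pW uW WL.
case/splitPr: xL sL cL WL => P1 P2 sL cL WL.
move: cL; rewrite mem_cat inE (negbTE cx) /= => /orP [cP1 | cP2]; last first.
  by case/splitPr: cP2 sL WL => D B sL WL; exact: spath_detour_fwd sL pW uW WL.
case/splitPr: cP1 sL WL => A D sL WL.
have eR : rev ((A ++ c :: D) ++ x :: P2) = rev P2 ++ x :: rev D ++ c :: rev A.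
  by rewrite !rev_cat !rev_cons !cat_rcons.
have /spath_rev := sL; rewrite eR => sR.
have [|M /spath_rev sM xcM] := spath_detour_fwd sR pW uW.
  by move=> w /WL; rewrite -eR mem_rev.
exists (rev M) => //; case: sM => _ uM _ _.
by apply: cycle_edges_rev; rewrite ?revK.
Qed.

Lemma spath_exit s t (L : seq T) Q1 y Q2 :
    spath s t (Q1 ++ y :: Q2) -> t \in L -> y \notin L ->
  exists c A, [/\ c \in Q2, c \in L, path g y (rcons A c), uniq (y :: A)
                & {in y :: A, forall w, w \notin L}].
Proof.
move=> [sQ uQ _ lQ] tL yL.
have tQ2 : t \in Q2.
  move: lQ; rewrite ohead_rev_cat; case: Q2 {sQ uQ} => [[yt] | z Q2 [<-]].
    by rewrite yt tL in yL.
  exact: mem_last.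
have /hasP hQ2 : exists2 z, z \in Q2 & z \in L by exists t.
move: sQ uQ; case/split_find: hQ2 => c A B cL AL sQ uQ.
exists c, A; split => //.
- by rewrite mem_cat mem_rcons mem_head.
- by move: sQ; rewrite sorted_cat_cons cat_path => /and3P [].
- move: uQ; rewrite cat_uniq -cat_cons cat_uniq => /and3P [_ _] /andP [].
  by rewrite -rcons_cons rcons_uniq => /andP [].
- by move=> w; rewrite inE => /orP [/eqP -> // | /(hasPn AL)].
Qed.

(* cycle_edges M lists the edges of the (s,t)-path M together with ts. *)
Lemma relevant_edge_spath s t x y :
    g x y -> relevant g s t x -> relevant g s t y ->
  exists2 M, spath s t M & [set x; y] \in cycle_edges M.
Proof.
move=> gxy /relevantP [L sL xL] /relevantP [Q sQ yQ].
have yx : y != x by apply: contraTneq gxy => ->; rewrite g_irr.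
have [yL | yL] := boolP (y \in L).
  by apply: (spath_detour (W := [::]) sL xL yL yx) => //=; rewrite gxy.
case/splitPr: yQ sQ => Q1 Q2 sQ.
have [c [A [cQ2 cL pA uA AL]]] := spath_exit sQ (spath_mem_end sL) yL.
have /spath_rev := sQ; rewrite rev_cat rev_cons cat_rcons => sQ'.
have [c' [A' [cQ1 cL' pA' uA' AL']]] := spath_exit sQ' (spath_mem_start sL) yL.
have cc' : c' != c.
  case: sQ => _ uQ _ _; apply: contraTneq cQ2 => <-.
  move: uQ; rewrite cat_uniq => /and3P [_ /hasPn nQ _].
  by apply: contraL cQ1 => cQ2'; rewrite mem_rev; apply: nQ; rewrite inE cQ2' orbT.
have [cx | cx] := eqVneq c x.
  by apply: (spath_detour sL xL cL' _ _ uA' AL'); rewrite /= ?gxy // -cx.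
by apply: (spath_detour sL xL cL cx _ uA AL); rewrite /= gxy.
Qed.

Section AddEdge.

Variables s t : T.

Lemma add_edge_l a b : a \notin [set s; t] -> add_edge g s t a b = g a b.
Proof.
by rewrite /add_edge in_set2 negb_or => /andP [/negbTE-> /negbTE->]; rewrite !orbF.
Qed.

Lemma add_edge_r a b : b \notin [set s; t] -> add_edge g s t a b = g a b.
Proof.
by rewrite /add_edge in_set2 negb_or => /andP [/negbTE-> /negbTE->]; rewrite !andbF !orbF.
Qed.

Lemma sub_add_edge : subrel g (add_edge g s t).
Proof. by move=> a b gab; rewrite /add_edge gab. Qed.

Lemma is_edge_st : is_edge (add_edge g s t) [set s; t].
Proof. by exists s, t; rewrite /add_edge !eqxx orbT. Qed.

Lemma path_add_edge_inner a q b :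
    all [pred v | v \notin [set s; t]] q -> q != [::] ->
    path (add_edge g s t) a (rcons q b) -> path g a (rcons q b).
Proof.
elim: q a => // x q IH a /= /andP [xP qP] _ /andP [ax pq].
rewrite -(add_edge_r _ xP) ax /=.
case: q IH qP pq => [|y q] IH qP pq; last exact: IH.
by move: pq => /=; rewrite add_edge_l.
Qed.

Lemma spath_cycle L : spath s t L -> cycle (add_edge g s t) L.
Proof.
case/spathP=> p -> [pp _ lp].
by rewrite /= rcons_path (sub_path sub_add_edge pp) lp /add_edge !eqxx !orbT.
Qed.

Lemma spath_edge_st L : spath s t L -> [set s; t] \in cycle_edges L.
Proof.
case/spathP=> p -> [_ up lp]; apply/mapP; exists t; first by rewrite -lp mem_last.
by rewrite -lp next_last // setUC.
Qed.

Lemma relevant_cycle_edge c F :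
    cycle (add_edge g s t) c -> {in c, forall v, relevant g s t v} ->
    F \in cycle_edges c -> relevant_plus_edges g s t F.
Proof.
move=> cc rc /mapP [v vc ->].
have := next_cycle cc vc; rewrite /add_edge => /or3P [gv | | ].
- by left; exists v, (next c v); split => //; apply: rc; rewrite ?mem_next.
- by case/andP=> /eqP -> /eqP ->; right.
- by case/andP=> /eqP -> /eqP ->; right; rewrite setUC.
Qed.

(* Rotated to start at the end u of its edge {u, w} = {s, t}, the cycle reads
   u :: w :: q; as q avoids s and t, w :: q ++ [u] is a simple path of G. *)
Lemma simple_cycle_relevant c v :
    simple_cycle (add_edge g s t) c -> [set s; t] \in cycle_edges c -> v \in c ->
  relevant g s t v.
Proof.
move=> [c3 uc cc] /mapP [u uc' est] vc.
case/rot_to: uc' => i r er.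
rewrite -(next_rot i uc) er next_head in est.
rewrite -(mem_rot i) er in vc; rewrite -(size_rot i) er in c3.
have := cc; rewrite -(rot_cycle i) er; have := uc; rewrite -(rot_uniq i) er.
case: r {er} est vc c3 => [|w q] //= est vc c3 ur cr.
have q0 : q != [::] by case: q c3 {est vc ur cr}.
have qP : all [pred z | z \notin [set s; t]] q.
  apply/allP => z zq; rewrite /= est in_set2 negb_or.
  case/and3P: ur; rewrite inE negb_or => /andP [_ uq] wq _.
  by apply/andP; split; [apply: contraNneq _ uq | apply: contraNneq _ wq] => <-.
have rwu : relevant g w u v.
  exists (rcons q u); split; last by rewrite -rcons_cons -rot1_cons mem_rot.
  split; last exact: last_rcons.
    by apply: path_add_edge_inner => //; case/andP: cr.
  by rewrite -rcons_cons -rot1_cons rot_uniq.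
have uP : u \in [set s; t] by rewrite est set21.
have wP : w \in [set s; t] by rewrite est set22.
have uw : u != w by case/and3P: ur; rewrite inE negb_or => /andP [].
move: rwu uw; case/set2P: uP => ->; case/set2P: wP => -> rwu; rewrite ?eqxx // => _.
exact: relevant_sym.
Qed.

Lemma spath_pair L : s != t -> spath s t L -> size L < 3 -> L = [:: s; t].
Proof.
move=> st /spathP [[|a [|b p]] -> [_ _ /= lp]] //; first by rewrite lp eqxx in st.
by rewrite lp.
Qed.

Lemma relevant_plus_edgesE F : s != t ->
  relevant_plus_edges g s t F <->
  is_edge (add_edge g s t) F /\ bicon_rel (add_edge g s t) [set s; t] F.
Proof.
move=> st; split; last first.
  case=> _ [<- | [c [cc stc Fc]]]; first by right.
  apply: relevant_cycle_edge Fc; first by case: cc.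
  by move=> v; exact: simple_cycle_relevant.
case=> [[x [y [gxy rx ry ->]]] | ->]; last by split; [exact: is_edge_st | left].
split; first by exists x, y; split => //; exact: sub_add_edge.
have [M sM xyM] := relevant_edge_spath gxy rx ry.
have [M3 | M2] := leqP 3 (size M).
  right; exists M; split => //; last exact: spath_edge_st.
  by split => //; [case: sM | exact: spath_cycle].
by left; move: xyM; rewrite (spath_pair st sM M2) => /mem_cycle_edges_pair.
Qed.

Lemma relevant_plus_verticesE v :
  relevant_plus_vertices g s t v <-> exists2 F, relevant_plus_edges g s t F & v \in F.
Proof.
split.
  case=> [rv | [-> | ->]]; last 2 first.
  - by exists [set s; t]; [right | exact: set21].
  - by exists [set s; t]; [right | exact: set22].
  case/relevantP: rv => L sL vL; exists [set v; next L v]; last exact: set21.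
  apply: relevant_cycle_edge (spath_cycle sL) _ _.
    by move=> w wL; apply/relevantP; exists L.
  by apply/mapP; exists v.
case=> F [[x [y [_ rx ry ->]]] | ->] /set2P [] ->; rewrite /relevant_plus_vertices; tauto.
Qed.

End AddEdge.

End RelevantVertices.

Theorem mainTheorem4 (T : finType) (g : rel T)
  (g_sym : symmetric g) (g_irr : irreflexive g) (s t : T) (hst : s != t) :
  exists B : {set {set T}},
    [/\ is_bicomp (add_edge g s t) B,
        bicomp_vertex B s, bicomp_vertex B t,
        (forall F, F \in B <-> relevant_plus_edges g s t F) &
        (forall v, bicomp_vertex B v <-> relevant_plus_vertices g s t v)].
Proof.
pose B := [set F | `[< relevant_plus_edges g s t F >]].
have BE F : F \in B <-> relevant_plus_edges g s t F.
  by rewrite inE; split => /asboolP.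
have stB : [set s; t] \in B by apply/BE; right.
exists B; split => //.
- exists [set s; t]; split; first exact: is_edge_st.
  by move=> F; rewrite BE (relevant_plus_edgesE g_sym g_irr F hst).
- by exists [set s; t]; last exact: set21.
- by exists [set s; t]; last exact: set22.
- move=> v; rewrite relevant_plus_verticesE.
  by split=> -[F /BE FB vF]; exists F.
Qed.
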